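(* (i) Every topological group without nontrivial convergent sequences is TAP. (ii) Every infinite pseudocompact topological group without nontrivial convergent sequences is TAP but not NSS.
   Context: Topological groups are Hausdorff. A topological group is NSS if some open neighborhood of the identity contains no nontrivial subgroup. A subset $A$ of a topological group $G$ is absolutely productive in $G$ if for every injection $a:\mathbb{N}\to A$ and every map $z:\mathbb{N}\to\mathbb{Z}$ the sequence $\left(\prod_{n=0}^{k}a(n)^{z(n)}\right)_{k\in\mathbb{N}}$ converges in $G$; $G$ is TAP if every absolutely productive subset of $G$ is finite. A nontrivial convergent sequence is a convergent sequence that is not eventually constant. *)

From HB Require Import structures.
From mathcomp Require Import all_boot all_order all_algebra.
From mathcomp Require Import all_classical all_reals all_analysis.
From mathcomp Require Import Rstruct Rstruct_topology.
Set Implicit Arguments. Unset Strict Implicit. Unset Printing Implicit Defensive.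
Import Order.TTheory GRing.Theory Num.Theory.
Local Open Scope classical_set_scope.

Section TopGroupDefs.
Variables (T : topologicalType) (mul : T -> T -> T) (inv : T -> T) (e : T).

Definition is_topgroup : Prop :=
  [/\ (forall x y z, mul x (mul y z) = mul (mul x y) z),
      (forall x, mul e x = x /\ mul x e = x),
      (forall x, mul (inv x) x = e /\ mul x (inv x) = e),
      (continuous (fun p : T * T => mul p.1 p.2) /\ continuous inv) &
      hausdorff_space T].

Definition zpow (x : T) (z : int) : T :=
  match z with
  | Posz n => iter n (mul x) e
  | Negz n => inv (iter n.+1 (mul x) e)
  end.

Fixpoint partial_prod (a : nat -> T) (z : nat -> int) (k : nat) : T :=
  match k with
  | 0 => zpow (a 0%N) (z 0%N)
  | k'.+1 => mul (partial_prod a z k') (zpow (a k) (z k))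
  end.

Definition is_subgroup (H : set T) : Prop :=
  [/\ H e, (forall x y, H x -> H y -> H (mul x y)) & (forall x, H x -> H (inv x))].

Definition NSS : Prop :=
  exists U : set T, [/\ open U, U e &
    forall H : set T, is_subgroup H -> H `<=` U -> H = [set e]].

Definition absolutely_productive (A : set T) : Prop :=
  forall (a : nat -> T) (z : nat -> int),
    injective a -> (forall n, A (a n)) ->
    exists l : T, partial_prod a z @ \oo --> l.

Definition TAP : Prop :=
  forall A : set T, absolutely_productive A -> finite_set A.

End TopGroupDefs.

Definition nontrivial_convergent_seq (T : topologicalType) (x : nat -> T) : Prop :=
  (exists l : T, x @ \oo --> l) /\ ~ (exists N, forall n, (N <= n)%N -> x n = x N).

Definition no_nontrivial_convergent_seq (T : topologicalType) : Prop :=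
  forall x : nat -> T, ~ nontrivial_convergent_seq x.

Definition pseudocompact (T : topologicalType) : Prop :=
  forall f : T -> Rdefinitions.R, continuous f -> exists M : Rdefinitions.R, forall x, (`|f x| <= M)%R.

From HB Require Import structures.
From mathcomp Require Import all_boot all_order all_algebra.
From mathcomp Require Import all_classical all_reals all_analysis.
From mathcomp Require Import Rstruct Rstruct_topology lra.
Set Implicit Arguments. Unset Strict Implicit. Unset Printing Implicit Defensive.
Import Order.TTheory GRing.Theory Num.Theory numFieldNormedType.Exports.
Local Open Scope classical_set_scope.
Local Open Scope ring_scope.

(** (i) If an infinite set [A] were absolutely productive, pick an injective
   sequence [a] in [A]: the partial products [p n] of [a] with all exponents [1]
   converge, hence so does [a n.+1 = (p n)^-1 (p n.+1)], towards [e].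
   (ii) If [U] witnesses NSS, a chain of symmetric neighbourhoods with
   [V n.+1 * V n.+1 ⊆ V n] and [V 0 = U] meets in a subgroup inside [U], i.e. in
   [e]; the Birkhoff-Kakutani pseudometric of the chain yields a continuous
   [d >= 0] vanishing exactly at [e].  Pseudocompactness makes the sets [d < r] a
   neighbourhood base at [e] and forbids [e] from being isolated (an infinite
   discrete space is not pseudocompact), so points [x n <> e] with
   [d (x n) < 1/(n+1)] form a nontrivial sequence converging to [e]. *)

Local Notation R := Rdefinitions.R.

Lemma infinite_set_injseq (T : Type) (A : set T) : infinite_set A ->
  exists2 a : nat -> T, injective a & forall n, A (a n).
Proof.
move=> /infiniteP /card_leP /injfunPex [f _ finj].
have setTn (n : nat) : n \in [set: nat] by exact: mem_set.
exists (fun n => val (f (exist _ n (setTn n)))) => [m n /val_inj|n].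
  by move=> /finj /(congr1 val); apply; rewrite inE.
exact: set_mem (valP _).
Qed.

Lemma injective_nontrivial_convergent_seq (T : topologicalType) (x : nat -> T) :
  injective x -> (exists l : T, x @ \oo --> l) -> nontrivial_convergent_seq x.
Proof.
move=> xI xcvg; split=> // -[N xN].
by have /xI/eqP := xN N.+1 (leqnSn N); rewrite gtn_eqF.
Qed.

Lemma avoiding_nontrivial_convergent_seq (T : topologicalType) (x : nat -> T) (l : T) :
  hausdorff_space T -> x @ \oo --> l -> (forall n, x n <> l) ->
  nontrivial_convergent_seq x.
Proof.
move=> hT xl xNl; split; first by exists l.
move=> [N xN]; apply: (xNl N).
have xN_cvg : x @ \oo --> x N by apply: cvg_near_cst; exists N.
by apply: (cvg_unique hT xN_cvg xl); exact: fmap_proper_filter.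
Qed.

Lemma pseudocompact_discrete_finite (T : topologicalType) :
  pseudocompact T -> (forall x : T, nbhs x [set x]) -> finite_set [set: T].
Proof.
move=> pcT discT; apply: contrapT => /infinite_set_injseq[a aI _].
pose f (y : T) : R := ('pinv_(fun=> 0%N) [set: nat] a y)%:R.
have fcont : continuous f.
  by move=> x B /= fxB; apply: filterS (discT x) => y /= ->; exact: nbhs_singleton.
have [M fM] := pcT f fcont.
have fa n : f (a n) = n%:R by rewrite /f pinvKV ?inE // => ? ? _ _; exact: aI.
have := fM (a (Num.truncn M).+1); rewrite fa normr_nat.
by have := truncnS_gt M; lra.
Qed.

Lemma pseudocompact_pos_bounded_below (T : topologicalType) (g : T -> R) :
  pseudocompact T -> continuous g -> (forall y, 0 < g y) ->
  exists2 c : R, 0 < c & forall y, c <= g y.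
Proof.
move=> pcT gcont gpos.
have ginv_cont : continuous (fun y => (g y)^-1).
  by move=> y; apply: cvgV; [rewrite gt_eqF|exact: gcont].
have [M gM] := pcT _ ginv_cont.
have M_le := ler_norm M; have M_ge0 := normr_ge0 M.
exists (1 + `|M|)^-1 => [|y]; first by rewrite invr_gt0; lra.
rewrite -[g y]invrK lef_pV2 ?posrE ?invr_gt0 ?gpos //.
by have := gM y; rewrite gtr0_norm ?invr_gt0 ?gpos //; lra.
Qed.

Section TopologicalGroup.
Variables (T : topologicalType) (mul : T -> T -> T) (inv : T -> T) (e : T).
Hypothesis G : is_topgroup mul inv e.

Lemma tg_mulA x y z : mul x (mul y z) = mul (mul x y) z.
Proof. by case: G. Qed.

Lemma tg_mul1g x : mul e x = x.
Proof. by case: G => _ /(_ x)[]. Qed.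

Lemma tg_mulg1 x : mul x e = x.
Proof. by case: G => _ /(_ x)[]. Qed.

Lemma tg_mulVg x : mul (inv x) x = e.
Proof. by case: G => _ _ /(_ x)[]. Qed.

Lemma tg_mulgV x : mul x (inv x) = e.
Proof. by case: G => _ _ /(_ x)[]. Qed.

Lemma tg_mul_continuous : continuous (fun p : T * T => mul p.1 p.2).
Proof. by case: G => _ _ _ []. Qed.

Lemma tg_inv_continuous : continuous inv.
Proof. by case: G => _ _ _ []. Qed.

Lemma tg_hausdorff : hausdorff_space T.
Proof. by case: G. Qed.

Lemma tg_invg_uniq x y : mul x y = e -> y = inv x.
Proof. by move=> xy; rewrite -[y]tg_mul1g -(tg_mulVg x) -tg_mulA xy tg_mulg1. Qed.

Lemma tg_invgK x : inv (inv x) = x.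
Proof. exact/esym/tg_invg_uniq/tg_mulVg. Qed.

Lemma tg_invg1 : inv e = e.
Proof. exact/esym/tg_invg_uniq/tg_mul1g. Qed.

Lemma tg_invgM x y : inv (mul x y) = mul (inv y) (inv x).
Proof.
by apply/esym/tg_invg_uniq; rewrite tg_mulA -(tg_mulA x) tg_mulgV tg_mulg1 tg_mulgV.
Qed.

Lemma tg_cvgM (I : Type) (F : set_system I) (u v : I -> T) (a b : T) :
  Filter F -> u @ F --> a -> v @ F --> b -> (fun i => mul (u i) (v i)) @ F --> mul a b.
Proof. by move=> FF; apply: continuous2_cvg (@tg_mul_continuous (a, b)). Qed.

Lemma tg_nbhs_translate (V : set T) x :
  nbhs e V -> nbhs x [set y | V (mul (inv x) y)].
Proof.
have xcont : mul (inv x) @ x --> mul (inv x) x by apply: tg_cvgM => //; exact: cvg_cst.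
by rewrite tg_mulVg in xcont; exact: xcont.
Qed.

Definition unit_split (W S : set T) : Prop :=
  [/\ nbhs e S, (forall x, S x -> S (inv x)) & forall x y, S x -> S y -> W (mul x y)].

Lemma tg_nbhs_split (V : set T) : nbhs e V -> exists S, unit_split V S.
Proof.
move=> Ve; have := @tg_mul_continuous (e, e); rewrite /continuous_at /= tg_mul1g.
move=> /(_ _ Ve) [[A B] /= [Ae Be] AB].
have ABe : nbhs e (A `&` B) by exact: filterI.
have invABe : nbhs e (inv @^-1` (A `&` B)).
  by apply: tg_inv_continuous; rewrite tg_invg1.
exists (A `&` B `&` inv @^-1` (A `&` B)); split; first exact: filterI.
  by move=> x [ABx ABix]; split => //=; rewrite tg_invgK.
by move=> x y [[Ax _] _] [[_ By] _]; exact: (AB (x, y)).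
Qed.

Lemma tg_discrete_of_isolated_unit : nbhs e [set e] -> forall x : T, nbhs x [set x].
Proof.
move=> isol x; apply: filterS (tg_nbhs_translate x isol) => y /= xy.
by rewrite -[y]tg_mul1g -(tg_mulgV x) -tg_mulA xy tg_mulg1.
Qed.

Lemma partial_prod_one_succ (a : nat -> T) n :
  let p := partial_prod mul inv e a (fun=> 1%Z) in
  a n.+1 = mul (inv (p n)) (p n.+1).
Proof. by rewrite /= tg_mulA tg_mulVg tg_mul1g /zpow /= tg_mulg1. Qed.

Lemma tg_cvg_succ_quotient (u : nat -> T) (l : T) :
  u @ \oo --> l -> (fun n => mul (inv (u n)) (u n.+1)) @ \oo --> e.
Proof.
move=> ul; rewrite -(tg_mulVg l); apply: tg_cvgM => //.
  exact: continuous_cvg (@tg_inv_continuous l) ul.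
by have := cvg_comp _ _ (cvg_addnr 1) ul; under eq_fun do rewrite addn1.
Qed.

Theorem tap_of_no_nontrivial_convergent_seq :
  no_nontrivial_convergent_seq T -> TAP mul inv e.
Proof.
move=> noseq A Aprod; apply: contrapT => /infinite_set_injseq[a aI aA].
have [l pl] := Aprod a (fun=> 1%Z) aI aA.
apply: (noseq (fun n => a n.+1)); apply: injective_nontrivial_convergent_seq.
  by move=> m n /aI [].
exists e; under eq_fun do rewrite partial_prod_one_succ.
exact: tg_cvg_succ_quotient pl.
Qed.

Lemma unit_split_sub (W S : set T) : unit_split W S -> S `<=` W.
Proof.
move=> [Se _ SSW] x Sx; rewrite -[x]tg_mulg1.
by apply: SSW => //; exact: nbhs_singleton.
Qed.

Definition unit_chain (V : nat -> set T) : Prop := forall n, unit_split (V n) (V n.+1).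

Lemma unit_chain_exists (W : set T) : nbhs e W -> exists2 V, unit_chain V & V 0%N = W.
Proof.
have split_ex (W' : set T) : exists S, nbhs e W' -> unit_split W' S.
  case: (pselect (nbhs e W')) => [/tg_nbhs_split[S ?]|W'N]; first by exists S.
  by exists W'.
have [split splitP] := boolp.choice split_ex.
move=> We; have iterP n : nbhs e (iter n split W).
  by elim: n => [|n IHn] //=; have [] := splitP _ IHn.
by exists (fun n => iter n split W) => // n; exact: splitP.
Qed.

Section UnitChain.
Variable V : nat -> set T.
Hypothesis Vchain : unit_chain V.

Lemma unit_chain_decr m n : (m <= n)%N -> V n `<=` V m.
Proof.
move=> /subnK <-; elim: (n - m)%N => [|k IHk] //= x Vx.
exact/IHk/(unit_split_sub (Vchain _)).
Qed.

Lemma unit_chain_cap_subgroup : is_subgroup mul inv e [set y | forall n, V n y].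
Proof.
split=> [n|x y Vx Vy n|x Vx n].
- by have [/nbhs_singleton Ve _ _] := Vchain n; exact: unit_split_sub (Vchain n) _ Ve.
- by have [_ _] := Vchain n; apply.
- by have [_ Vsym _] := Vchain n; exact/(unit_split_sub (Vchain n))/Vsym.
Qed.

Definition chain_entourage : set_system (T * T) :=
  filter_from [set: nat] (fun n => [set xy | V n.+1 (mul (inv xy.1) xy.2)]).

Lemma chain_entourage_filter : Filter chain_entourage.
Proof.
apply: filter_from_filter; first by exists 0%N.
move=> m n _ _; exists (maxn m n) => // -[x y] /= Vxy.
by split; apply: unit_chain_decr Vxy; rewrite ltnS ?leq_maxl ?leq_maxr.
Qed.

Lemma chain_entourage_diagonal A : chain_entourage A -> diagonal `<=` A.
Proof.
move=> [n _ nA] [x y]; rewrite /diagonal /= => <-; apply: nA; rewrite /= tg_mulVg.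
by have [Ve _ _] := Vchain n; exact: nbhs_singleton Ve.
Qed.

Lemma chain_entourage_inv A : chain_entourage A -> chain_entourage A^-1%relation.
Proof.
move=> [n _ nA]; exists n => // -[x y] /= Vxy; apply: (nA (y, x)) => /=.
by have [_ Vsym _] := Vchain n; have := Vsym _ Vxy; rewrite tg_invgM tg_invgK.
Qed.

Lemma chain_entourage_split A :
  chain_entourage A -> exists2 B, chain_entourage B & (B \; B `<=` A)%relation.
Proof.
move=> [n _ nA]; exists [set xy | V n.+2 (mul (inv xy.1) xy.2)]; first by exists n.+1.
move=> [x z] [y /= Vxy Vyz]; apply: nA => /=.
have -> : mul (inv x) z = mul (mul (inv x) y) (mul (inv y) z).
  by rewrite -tg_mulA (tg_mulA y) tg_mulgV tg_mul1g.
by have [_ _] := Vchain n.+1; apply.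
Qed.

Definition chain_space of unit_chain V : Type := T.

HB.instance Definition _ := Choice.on (chain_space Vchain).
HB.instance Definition _ := @isUniform.Build (chain_space Vchain) chain_entourage
  chain_entourage_filter chain_entourage_diagonal chain_entourage_inv
  chain_entourage_split.

Lemma chain_space_countable_uniformity : countable_uniformity (chain_space Vchain).
Proof.
apply/countable_uniformityP.
exists (fun n => [set xy | V n.+1 (mul (inv xy.1) xy.2)]) => [A [n _ nA]|n].
  by exists n.
by exists n.
Qed.

Lemma chain_space_nbhs (x : T) (A : set T) :
  @nbhs _ (chain_space Vchain) x A -> nbhs x A.
Proof.
rewrite -nbhs_entourageE => -[E [n _ nE] EA].
have [Ve _ _] := Vchain n.
apply: filterS (tg_nbhs_translate x Ve) => y Vy.
by apply: EA; apply/mem_set; exact: nE.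
Qed.

Lemma unit_chain_pseudonorm : exists d : T -> R,
  [/\ continuous d, forall y, 0 <= d y, d e = 0 &
      forall n, exists2 r : R, 0 < r & forall y, d y < r -> V n y].
Proof.
pose X := countable_uniform.type chain_space_countable_uniformity.
pose d (y : T) := fine (@edist R X (e, y)).
have dE y : @edist R X (e, y) = (d y)%:E.
  rewrite fineK //; apply/edist_finP; exists 2 => //.
  exact: countable_uniform.countable_uniform_bounded.
exists d; split.
- move=> y.
  have edist_cvg : (fun z : X => @edist R X (e, z)) @ (y : X) --> (d y)%:E.
    rewrite -dE; apply: (cvg_comp (fun z : X => (e, z)) (@edist R X)
      (cvg_pair (cvg_cst (e : X)) (@cvg_id _ (nbhs (y : X))))).
    exact: edist_continuous.
  by apply: cvg_trans (fine_cvg edist_cvg) => A /=; exact: chain_space_nbhs.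
- by move=> y; rewrite -lee_fin -dE edist_ge0.
- by rewrite /d edist_refl.
- move=> n; have : @entourage X [set xy | V n.+1 (mul (inv xy.1) xy.2)] by exists n.
  rewrite -(@entourage_ballE _ (X : pseudoMetricType R)) => -[r /= r0 rV].
  exists r => // y dy.
  apply: unit_split_sub (Vchain n) _ _.
  have /(rV (e, y)) /= : ball (e : X) r (y : X).
    by apply: (@edist_lt_ball R X r (e, y)); rewrite dE lte_fin.
  by rewrite tg_invg1 tg_mul1g.
Qed.

End UnitChain.
End TopologicalGroup.

Lemma nss_unit_pseudonorm (T : topologicalType) (mul : T -> T -> T) (inv : T -> T)
    (e : T) :
  is_topgroup mul inv e -> NSS mul inv e -> exists d : T -> R,
  [/\ continuous d, forall y, 0 <= d y, d e = 0 & forall y, d y = 0 -> y = e].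
Proof.
move=> G [U [Uo Ue Usg]].
have [V Vchain V0] := unit_chain_exists G (open_nbhs_nbhs (conj Uo Ue)).
have [d [d_cont d_ge0 d_e d_small]] := unit_chain_pseudonorm G Vchain.
exists d; split=> // y dy0.
have capV : [set y | forall n, V n y] = [set e].
  by apply: Usg (unit_chain_cap_subgroup G Vchain) _ => z; rewrite -V0; apply.
have : [set y | forall n, V n y] y.
  by move=> n; have [r r0] := d_small n; apply; rewrite dy0.
by rewrite capV.
Qed.

Section PseudocompactGroup.
Variables (T : topologicalType) (mul : T -> T -> T) (inv : T -> T) (e : T).
Hypotheses (G : is_topgroup mul inv e) (pcT : pseudocompact T).
Variable d : T -> R.
Hypotheses (d_cont : continuous d) (d_ge0 : forall y, 0 <= d y) (d_e : d e = 0)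
  (d_eq0 : forall y, d y = 0 -> y = e).

Lemma pseudonorm_small_sub (W : set T) :
  nbhs e W -> exists2 r : R, 0 < r & forall y, d y < r -> W y.
Proof.
move=> We; have [V Vchain <-] := unit_chain_exists G We.
have [dV [dV_cont _ dV_e dV_small]] := unit_chain_pseudonorm G Vchain.
have [r r0 rV] := dV_small 0%N.
(* [g] is positive everywhere since [d] only vanishes at [e], where [dV] does;
   a lower bound [c] for [g] then forces [dV y < r] whenever [d y < c]. *)
pose g : T -> R^o := d + (fun y => Num.max 0 (r - dV y)).
have max_cont : continuous (fun y => Num.max 0 (r - dV y)).
  move=> z; apply: (@continuous_max _ _ (fun=> 0) (fun y => r - dV y)).
    exact: cvg_cst.
  by apply: cvgB; [exact: cvg_cst|exact: dV_cont].
have g_cont : continuous g.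
  by move=> y; apply: cvgD; [exact: d_cont|exact: max_cont].
have g_pos y : 0 < g y.
  have [->|ye] := eqVneq y e; first by rewrite /g fctE d_e dV_e subr0 add0r maxEle ltW.
  have dy_gt0 : 0 < d y.
    by rewrite lt_def d_ge0 andbT; apply: contra_neq ye; exact: d_eq0.
  have max_ge0 : 0 <= Num.max 0 (r - dV y) by rewrite le_max lexx.
  by rewrite /g fctE; lra.
have [c c0 cg] := pseudocompact_pos_bounded_below pcT g_cont g_pos.
exists c => // y dy; apply: rV; have := cg y.
by rewrite /g fctE maxEle; case: ifP => _; lra.
Qed.

Lemma pseudonorm_nonisolated : infinite_set [set: T] ->
  forall r : R, 0 < r -> exists y, y <> e /\ d y < r.
Proof.
move=> Tinf r r0; apply: contrapT => nosmall; apply: Tinf.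
apply: pseudocompact_discrete_finite pcT _; apply: tg_discrete_of_isolated_unit G _.
have de_lt : d e < r by rewrite d_e.
apply: filterS (cvgr_lt (d e) (@d_cont e) r de_lt) => y dy.
by apply: contrapT => ye; apply: nosmall; exists y.
Qed.

Lemma pseudonorm_nontrivial_convergent_seq : infinite_set [set: T] ->
  exists x : nat -> T, nontrivial_convergent_seq x.
Proof.
move=> Tinf.
have small n : exists y, y <> e /\ d y < n.+1%:R^-1.
  by apply: pseudonorm_nonisolated Tinf _ _; rewrite invr_gt0.
have [x xP] := boolp.choice small.
exists x; apply: (avoiding_nontrivial_convergent_seq (tg_hausdorff G)) => [W|n].
  move=> /pseudonorm_small_sub[r r0 rW].
  apply: filterS (near_infty_natSinv_lt (PosNum r0)).
  by move=> n /= nr; apply: rW; exact: lt_trans (xP n).2 nr.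
by have [] := xP n.
Qed.

End PseudocompactGroup.

Theorem proposition4p10 :
  (forall (T : topologicalType) (mul : T -> T -> T) (inv : T -> T) (e : T),
     is_topgroup mul inv e ->
     no_nontrivial_convergent_seq T ->
     TAP mul inv e)
  /\
  (forall (T : topologicalType) (mul : T -> T -> T) (inv : T -> T) (e : T),
     is_topgroup mul inv e ->
     infinite_set [set: T] ->
     pseudocompact T ->
     no_nontrivial_convergent_seq T ->
     TAP mul inv e /\ ~ NSS mul inv e).
Proof.
split=> [T mul inv e G|T mul inv e G Tinf pcT noseq].
  exact: tap_of_no_nontrivial_convergent_seq.
split; first exact: tap_of_no_nontrivial_convergent_seq.
move=> /(nss_unit_pseudonorm G)[d [d_cont d_ge0 d_e d_eq0]].
have [x] := pseudonorm_nontrivial_convergent_seq G pcT d_cont d_ge0 d_e d_eq0 Tinf.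
exact: noseq.
Qed.
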